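(* Let $d\ge 2$ and $2\le k\le d+1$, and let $y_1,\dots,y_N\in\{1,\dots,k\}$ be labels with every class appearing at least once. For prototypes $\boldsymbol w_1,\dots,\boldsymbol w_k\in\mathbb S^{d-1}$ and features $\boldsymbol z_1,\dots,\boldsymbol z_N\in\mathbb S^{d-1}$, define $$\gamma_{\min}=\min_{1\le i\le N}\Big(\boldsymbol w_{y_i}^{\mathrm T}\boldsymbol z_i-\max_{j\ne y_i}\boldsymbol w_j^{\mathrm T}\boldsymbol z_i\Big).$$ Then the maximum of $\gamma_{\min}$ over all such configurations is $\frac{k}{k-1}$, and it is attained if and only if $\boldsymbol w_i^{\mathrm T}\boldsymbol w_j=-\frac{1}{k-1}$ for all $i\ne j$ and $\boldsymbol z_i=\boldsymbol w_{y_i}$ for all $i$.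
   Context: $\mathbb S^{d-1}$ is the unit sphere in $\mathbb R^d$. Feature $\boldsymbol z_i$ is associated with label $y_i$; $\gamma_{\min}$ is the minimal sample margin over the dataset. *)

From HB Require Import structures.
From mathcomp Require Import all_boot all_order all_algebra.
From mathcomp Require Import reals constructive_ereal.
Set Implicit Arguments. Unset Strict Implicit. Unset Printing Implicit Defensive.
Import Order.TTheory GRing.Theory Num.Theory.
Local Open Scope ring_scope.

Definition dotv (R : realType) (d : nat) (u v : 'rV[R]_d) : R :=
  \sum_(i < d) u ord0 i * v ord0 i.

Definition on_sphere (R : realType) (d : nat) (u : 'rV[R]_d) : Prop :=
  dotv u u = 1.

Local Open Scope ereal_scope.

(* sample margin of sample i: w_{y_i}^T z_i - max_{j <> y_i} w_j^T z_i
   (computed in the extended reals; the max is over a nonempty set when k >= 2) *)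
Definition sample_margin (R : realType) (d k N : nat) (y : 'I_N -> 'I_k)
  (w : 'I_k -> 'rV[R]_d) (z : 'I_N -> 'rV[R]_d) (i : 'I_N) : \bar R :=
  (dotv (w (y i)) (z i))%:E
  - \big[Order.max/-oo]_(j < k | j != y i) (dotv (w j) (z i))%:E.

Definition gamma_min (R : realType) (d k N : nat) (y : 'I_N -> 'I_k)
  (w : 'I_k -> 'rV[R]_d) (z : 'I_N -> 'rV[R]_d) : \bar R :=
  \big[Order.min/+oo]_(i < N) sample_margin y w z i.

From HB Require Import structures.
From mathcomp Require Import all_boot all_order all_algebra.
From mathcomp Require Import reals constructive_ereal.
From mathcomp Require Import ring lra.
Import Order.TTheory GRing.Theory Num.Theory.
Set Implicit Arguments. Unset Strict Implicit. Unset Printing Implicit Defensive.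
Local Open Scope ring_scope.

(* A sample [i] of class [c] has margin at most [w_c.z_i] minus the mean of the
   other [w_j.z_i], which is [k/(k-1) (w_c - S/k).z_i] with [S] the sum of the
   prototypes; since [2 a.z <= |a|^2 + 1], this is at most
   [k/(k-1) (|w_c - S/k|^2 + 1)/2].  Averaging over the [k] classes and using
   [sum_c |w_c - S/k|^2 = k - |S|^2/k] gives
   [gamma_min <= k/(k-1) - |S|^2/(2k(k-1))].  At equality [S = 0], then
   [z_i = w_(y_i)] by the equality case of [2 a.z <= |a|^2 + 1], and finally every
   [w_j.w_c] with [j <> c] equals the mean [-1/(k-1)] of these numbers.  A regular
   simplex with [k <= d+1] vertices is built from [k-1] orthonormal vectors. *)

Section DotProduct.
Variables (R : realType) (d : nat).
Implicit Types u v x : 'rV[R]_d.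

Lemma dotvC u v : dotv u v = dotv v u.
Proof. by apply: eq_bigr => i _; rewrite mulrC. Qed.

Lemma dotvDl u v x : dotv (u + v) x = dotv u x + dotv v x.
Proof. by rewrite /dotv -big_split; apply: eq_bigr => i _; rewrite mxE mulrDl. Qed.

Lemma dotvZl a u x : dotv (a *: u) x = a * dotv u x.
Proof. by rewrite /dotv mulr_sumr; apply: eq_bigr => i _; rewrite mxE mulrA. Qed.

Lemma dotv0l x : dotv 0 x = 0.
Proof. by rewrite /dotv big1 // => i _; rewrite mxE mul0r. Qed.

Lemma dotvBl u v x : dotv (u - v) x = dotv u x - dotv v x.
Proof. by rewrite dotvDl -scaleN1r dotvZl mulN1r. Qed.

Lemma dotvDr u v x : dotv x (u + v) = dotv x u + dotv x v.
Proof. by rewrite dotvC dotvDl !(dotvC x). Qed.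

Lemma dotvZr a u x : dotv x (a *: u) = a * dotv x u.
Proof. by rewrite dotvC dotvZl dotvC. Qed.

Lemma dotvBr u v x : dotv x (u - v) = dotv x u - dotv x v.
Proof. by rewrite dotvC dotvBl !(dotvC x). Qed.

Lemma dotv_suml (I : finType) (P : pred I) (F : I -> 'rV[R]_d) x :
  dotv (\sum_(i | P i) F i) x = \sum_(i | P i) dotv (F i) x.
Proof.
by apply: (big_morph (fun u => dotv u x)) => [u v|]; [exact: dotvDl | exact: dotv0l].
Qed.

Lemma dotv_sumr (I : finType) (P : pred I) (F : I -> 'rV[R]_d) x :
  dotv x (\sum_(i | P i) F i) = \sum_(i | P i) dotv x (F i).
Proof. by rewrite dotvC dotv_suml; apply: eq_bigr => i _; rewrite dotvC. Qed.

Lemma dotvv_ge0 u : 0 <= dotv u u.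
Proof. by apply: sumr_ge0 => i _; rewrite -expr2 sqr_ge0. Qed.

Lemma dotvv_eq0 u : (dotv u u == 0) = (u == 0).
Proof.
apply/eqP/eqP => [u0|->]; last exact: dotv0l.
apply/rowP => i; rewrite mxE.
have sq_ge0 j : true -> 0 <= u ord0 j * u ord0 j by rewrite -expr2 sqr_ge0.
by have /eqP := psumr_eq0P sq_ge0 u0 (i := i) isT; rewrite mulf_eq0 orbb => /eqP.
Qed.

Lemma dotv_le_sqr_mean u v : 2 * dotv u v <= dotv u u + dotv v v.
Proof. by have := dotvv_ge0 (u - v); rewrite dotvBl !dotvBr (dotvC v u); lra. Qed.

Lemma sphere_eq_of_dotv_ge1 u v :
  on_sphere u -> on_sphere v -> 1 <= dotv u v -> u = v.
Proof.
move=> u1 v1 uv1; apply/eqP; rewrite -subr_eq0 -dotvv_eq0 eq_le dotvv_ge0 andbT.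
by rewrite dotvBl !dotvBr (dotvC v u) u1 v1; lra.
Qed.

Lemma sum_dotv_centered (I : finType) (v : I -> 'rV[R]_d) :
  let S := \sum_i v i in
  \sum_i dotv (v i - #|I|%:R^-1 *: S) (v i - #|I|%:R^-1 *: S)
  = \sum_i dotv (v i) (v i) - dotv S S / #|I|%:R.
Proof.
move=> S; have [I0|In0] := eqVneq #|I| 0%N.
  have noI (i : I) : false by have := card0_eq I0 i; rewrite !inE.
  by rewrite /S !big_pred0 ?dotv0l ?mul0r ?subrr // => i; have := noI i.
have n0 : (#|I|%:R : R) != 0 by rewrite pnatr_eq0.
rewrite (eq_bigr (fun i => dotv (v i) (v i) - 2 * #|I|%:R^-1 * dotv S (v i)
                            + #|I|%:R^-2 * dotv S S)); last first.
  by move=> i _; rewrite dotvBl !dotvBr !dotvZl !dotvZr (dotvC (v i)); field.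
rewrite big_split sumrB /= -mulr_sumr -dotv_sumr -/S sumr_const.
by change #|xpredT| with #|I|; field.
Qed.

Lemma dotv_delta_mx (i j : 'I_d) : dotv 'e_i 'e_j = (i == j)%:R :> R.
Proof.
rewrite /dotv (bigD1 i) //= big1 => [|l li]; last by rewrite !mxE (negbTE li) mul0r.
by rewrite !mxE eqxx eq_sym mul1r addr0.
Qed.

End DotProduct.

Lemma sum_eq_const_le (R : numDomainType) (I : finType) (P : pred I)
    (F : I -> R) (c : R) :
  (forall i, P i -> F i <= c) -> \sum_(i | P i) F i = \sum_(i | P i) c ->
  forall i, P i -> F i = c.
Proof.
move=> Fc sumFc i Pi; apply/eqP; rewrite eq_sym -subr_eq0; apply/eqP.
have gap_ge0 j : P j -> 0 <= c - F j by move=> Pj; rewrite subr_ge0 Fc.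
by apply: (psumr_eq0P gap_ge0) => //; rewrite sumrB sumFc subrr.
Qed.

Lemma exists_neq_ord (k : nat) (c : 'I_k) : (1 < k)%N -> exists j : 'I_k, j != c.
Proof.
move=> k_gt1; pose j0 := Ordinal (ltnW k_gt1); pose j1 := Ordinal k_gt1.
by case: (eqVneq c j0) => [->|cj0]; [exists j1 | exists j0; rewrite eq_sym].
Qed.

Section SampleMargin.
Variables (R : realType) (d k N : nat) (y : 'I_N -> 'I_k).
Variables (w : 'I_k -> 'rV[R]_d) (z : 'I_N -> 'rV[R]_d).

Lemma gamma_min_le_margin i : (gamma_min y w z <= sample_margin y w z i)%E.
Proof. exact: (@bigmin_le_cond _ _ _ +oo%E i xpredT). Qed.

Lemma gamma_min_attained : (0 < N)%N ->
  exists i, gamma_min y w z = sample_margin y w z i.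
Proof.
move=> N_gt0; have [i _ gamma_i] := @eq_bigmin _ _ _ +oo%E (Ordinal N_gt0) xpredT
  (sample_margin y w z) isT (fun _ _ => leey _).
by exists i.
Qed.

Hypothesis k_gt1 : (1 < k)%N.

Let k_gt0 : 0 < (k%:R : R). Proof. by rewrite ltr0n ltnW. Qed.
Let k1_gt0 : 0 < (k%:R : R) - 1. Proof. by rewrite subr_gt0 ltr1n. Qed.

Lemma sample_margin_argmax i : exists2 j, j != y i &
  (forall j', j' != y i -> dotv (w j') (z i) <= dotv (w j) (z i)) /\
  sample_margin y w z i = (dotv (w (y i)) (z i) - dotv (w j) (z i))%:E.
Proof.
have [j0 j0y] := exists_neq_ord (y i) k_gt1.
have [j jy maxj] := @eq_bigmax _ _ _ -oo%E j0 (fun j => j != y i)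
   (fun j => (dotv (w j) (z i))%:E) j0y (fun _ _ => leNye _).
exists j => //; split; last by rewrite /sample_margin maxj.
move=> j' j'y; rewrite -lee_fin -maxj.
exact: (@le_bigmax_cond _ _ _ -oo%E j' (fun j => j != y i)).
Qed.

Lemma sum_neq_const (c : 'I_k) (x : R) : \sum_(j | j != c) x = (k%:R - 1) * x.
Proof.
have := sumr_const (pred_of_simpl (@predT 'I_k)) x.
rewrite (bigD1 c) //= card_ord => sumx.
by rewrite mulrBl mul1r mulr_natl -sumx addrAC subrr add0r.
Qed.

Lemma sample_margin_le_mean i :
  (sample_margin y w z i <= (dotv (w (y i)) (z i)
     - (k%:R - 1)^-1 * \sum_(j | j != y i) dotv (w j) (z i))%:E)%E.
Proof.
have [j jy [maxj ->]] := sample_margin_argmax i; rewrite lee_fin lerD2l lerN2.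
rewrite ler_pdivrMl // -(sum_neq_const (y i)).
by apply: ler_sum => j' j'y; apply: maxj.
Qed.

Hypothesis w_unit : forall j, on_sphere (w j).
Hypothesis z_unit : forall i, on_sphere (z i).
Hypothesis y_surj : forall c, exists i, y i = c.

Let S := \sum_j w j.

Let K_eq : k%:R / (k%:R - 1) = 1 + (k%:R - 1 : R)^-1.
Proof. by field; rewrite gt_eqF. Qed.

Let centered c := w c - k%:R^-1 *: S.

Lemma gamma_min_le_class c : (gamma_min y w z
  <= (k%:R / (k%:R - 1) * ((dotv (centered c) (centered c) + 1) / 2))%:E)%E.
Proof.
have [i yi] := y_surj c.
apply: (le_trans (gamma_min_le_margin i)).
apply: (le_trans (sample_margin_le_mean i)); rewrite lee_fin yi.
have -> : dotv (w c) (z i) - (k%:R - 1)^-1 * \sum_(j | j != c) dotv (w j) (z i)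
          = k%:R / (k%:R - 1) * dotv (centered c) (z i).
  rewrite /centered dotvBl dotvZl /S dotv_suml [X in k%:R^-1 * X](bigD1 c) //=.
  by field; rewrite !gt_eqF.
apply: ler_wpM2l; first by rewrite divr_ge0 ?ltW.
by have := dotv_le_sqr_mean (centered c) (z i); rewrite z_unit; lra.
Qed.

Lemma gamma_min_le_centroid g : gamma_min y w z = g%:E ->
  g <= k%:R / (k%:R - 1) - dotv S S / (2 * k%:R * (k%:R - 1)).
Proof.
move=> gE.
have : \sum_(c < k) g
       <= \sum_c k%:R / (k%:R - 1) * ((dotv (centered c) (centered c) + 1) / 2).
  by apply: ler_sum => c _; rewrite -lee_fin -gE gamma_min_le_class.
have := sum_dotv_centered w; rewrite card_ord /= -/S => centered_sum.
rewrite -mulr_sumr -mulr_suml big_split /= centered_sum.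
rewrite [\sum_(i < k) dotv _ _](eq_bigr (fun=> 1)) => [|j _]; last exact: w_unit.
rewrite !sumr_const card_ord -[g *+ k]mulr_natr -[1 *+ k]/(k%:R) => le_sum.
rewrite -(ler_pM2r k_gt0); apply: (le_trans le_sum).
by rewrite le_eqVlt; apply/orP; left; apply/eqP; field; rewrite !gt_eqF.
Qed.

Let N_gt0 : (0 < N)%N.
Proof.
by have [i _] := y_surj (Ordinal (ltnW k_gt1)); apply: leq_ltn_trans (ltn_ord i).
Qed.

Lemma gamma_min_fin : exists g : R, gamma_min y w z = g%:E.
Proof.
have [i ->] := gamma_min_attained N_gt0.
by have [j _ [_ ->]] := sample_margin_argmax i; eexists.
Qed.

Lemma gamma_min_le_bound : (gamma_min y w z <= (k%:R / (k%:R - 1))%:E)%E.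
Proof.
have [g gE] := gamma_min_fin; rewrite gE lee_fin.
apply: (le_trans (gamma_min_le_centroid gE)); rewrite gerBl.
by rewrite divr_ge0 ?dotvv_ge0 // !mulr_ge0 ?ltW.
Qed.

Lemma gamma_min_simplex :
  (forall a b, a != b -> dotv (w a) (w b) = - 1 / (k%:R - 1)) ->
  (forall i, z i = w (y i)) ->
  gamma_min y w z = (k%:R / (k%:R - 1))%:E.
Proof.
move=> simplex zw; have [i ->] := gamma_min_attained N_gt0.
have [j jy [_ ->]] := sample_margin_argmax i.
rewrite zw w_unit dotvC simplex; last by rewrite eq_sym.
by congr EFin; field; rewrite gt_eqF.
Qed.

Section Maximizer.
Hypothesis gamma_max : gamma_min y w z = (k%:R / (k%:R - 1))%:E.

Lemma maximizer_centroid_eq0 : S = 0.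
Proof.
move: (gamma_min_le_centroid gamma_max) => centroid_le.
have : dotv S S / (2 * k%:R * (k%:R - 1)) <= 0 by lra.
rewrite pmulr_lle0 ?invr_gt0 ?mulr_gt0 // => SS_le0.
by apply/eqP; rewrite -dotvv_eq0 eq_le SS_le0 dotvv_ge0.
Qed.

Let sum_neq_dotv c x :
  \sum_(j | j != c) dotv (w j) x = - dotv (w c) x.
Proof.
have := congr1 (fun u => dotv u x) maximizer_centroid_eq0.
rewrite /S dotv_suml (bigD1 c) //= dotv0l => /eqP.
by rewrite addrC addr_eq0 => /eqP.
Qed.

Lemma maximizer_features i : z i = w (y i).
Proof.
apply/esym/sphere_eq_of_dotv_ge1 => //.
have := le_trans (gamma_min_le_margin i) (sample_margin_le_mean i).
rewrite gamma_max lee_fin sum_neq_dotv => K_le.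
have q_gt0 : 0 < (k%:R - 1 : R)^-1 by rewrite invr_gt0.
by rewrite K_eq mulrN opprK in K_le; nra.
Qed.

Lemma maximizer_simplex a b : a != b -> dotv (w a) (w b) = - 1 / (k%:R - 1).
Proof.
move=> ab; have [i yi] := y_surj a.
have [j ja [maxj margin_i]] := sample_margin_argmax i.
have := gamma_min_le_margin i.
rewrite gamma_max margin_i maximizer_features yi w_unit lee_fin => K_le.
rewrite maximizer_features yi in maxj.
have le_bound j' : j' != a -> dotv (w j') (w a) <= - 1 / (k%:R - 1).
  by move=> j'a; apply: (le_trans (maxj j' j'a)); rewrite K_eq in K_le; lra.
rewrite dotvC; apply: (sum_eq_const_le le_bound); last by rewrite eq_sym.
rewrite sum_neq_dotv w_unit sum_neq_const.
by field; rewrite gt_eqF.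
Qed.

End Maximizer.

End SampleMargin.

Section RegularSimplex.
Variables (R : realType) (d n : nat) (e : 'I_n -> 'rV[R]_d).
Hypothesis e_orthonormal : forall i j, dotv (e i) (e j) = (i == j)%:R.
Hypothesis n_gt0 : (0 < n)%N.
Variables alpha gamma : R.
Hypothesis alpha_sqr : alpha ^+ 2 = n.+1%:R / n%:R.
Hypothesis gamma_sqr : gamma ^+ 2 = n%:R^-1.

Let U := \sum_j e j.
Let beta := (gamma - alpha) / n%:R.
Let n_neq0 : n%:R != 0 :> R. Proof. by rewrite pnatr_eq0 -lt0n. Qed.

(* [beta] makes every [alpha *: e j + beta *: U] have inner product
   [-gamma^2 = -1/n] with the last vertex [-gamma *: U]. *)
Definition simplex_vertex (c : 'I_n.+1) : 'rV[R]_d :=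
  if unlift ord_max c is Some j then alpha *: e j + beta *: U else - gamma *: U.

Let dotv_e_U i : dotv (e i) U = 1.
Proof.
rewrite dotv_sumr (bigD1 i) //= e_orthonormal eqxx big1 ?addr0 // => j ji.
by rewrite e_orthonormal eq_sym (negbTE ji).
Qed.

Let dotv_U_U : dotv U U = n%:R.
Proof.
rewrite {1}/U dotv_suml (eq_bigr (fun=> 1)) => [|j _]; last exact: dotv_e_U.
by rewrite sumr_const card_ord.
Qed.

Lemma simplex_vertex_dotv a b : dotv (simplex_vertex a) (simplex_vertex b)
  = if a == b then 1 else - n%:R^-1.
Proof.
rewrite /simplex_vertex; case: unliftP => [i ->|->]; case: unliftP => [j ->|->].
- rewrite (inj_eq (@lift_inj _ ord_max)) !dotvDl !dotvDr !dotvZl !dotvZr.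
  rewrite e_orthonormal dotv_e_U (dotvC U) dotv_e_U dotv_U_U.
  rewrite [LHS](_ : _ = alpha ^+ 2 * (i == j)%:R + (gamma ^+ 2 - alpha ^+ 2) / n%:R).
    by rewrite alpha_sqr gamma_sqr -natr1; case: eqP => _ /=; field.
  by rewrite /beta; field.
- rewrite eq_sym (negbTE (neq_lift _ _)) dotvDl !dotvZl !dotvZr dotv_e_U dotv_U_U.
  rewrite [LHS](_ : _ = - gamma ^+ 2); first by rewrite gamma_sqr.
  by rewrite /beta; field.
- rewrite (negbTE (neq_lift _ _)) dotvDr !dotvZl !dotvZr (dotvC U) dotv_e_U dotv_U_U.
  rewrite [LHS](_ : _ = - gamma ^+ 2); first by rewrite gamma_sqr.
  by rewrite /beta; field.
- rewrite eqxx !dotvZl !dotvZr dotv_U_U !(mulNr, mulrN) opprK mulrA -expr2.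
  by rewrite gamma_sqr mulVf.
Qed.

End RegularSimplex.

Lemma regular_simplex_exists (R : realType) (d k : nat) :
  (1 < k)%N -> (k <= d.+1)%N ->
  exists w : 'I_k -> 'rV[R]_d, (forall j, on_sphere (w j)) /\
    (forall a b, a != b -> dotv (w a) (w b) = - 1 / (k%:R - 1)).
Proof.
case: k => // n; rewrite !ltnS => n_gt0 n_le_d.
pose e (j : 'I_n) : 'rV[R]_d := 'e_(widen_ord n_le_d j).
have e_orthonormal i j : dotv (e i) (e j) = (i == j)%:R by rewrite dotv_delta_mx.
have alpha_sqr : Num.sqrt (n.+1%:R / n%:R) ^+ 2 = n.+1%:R / n%:R :> R.
  by rewrite sqr_sqrtr // divr_ge0.
have gamma_sqr : Num.sqrt n%:R^-1 ^+ 2 = n%:R^-1 :> R by rewrite sqr_sqrtr // invr_ge0.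
have w_dotv := simplex_vertex_dotv e_orthonormal n_gt0 alpha_sqr gamma_sqr.
exists (simplex_vertex e (Num.sqrt (n.+1%:R / n%:R)) (Num.sqrt n%:R^-1)).
split => [j|a b ab]; first by rewrite /on_sphere w_dotv eqxx.
by rewrite w_dotv (negbTE ab) -natr1 addrK mulN1r.
Qed.

Theorem proposition1 (R : realType) (d k N : nat) (y : 'I_N -> 'I_k) :
  (2 <= d)%N -> (2 <= k)%N -> (k <= d.+1)%N ->
  (forall c : 'I_k, exists i : 'I_N, y i = c) ->
  (* upper bound *)
  (forall (w : 'I_k -> 'rV[R]_d) (z : 'I_N -> 'rV[R]_d),
     (forall j, on_sphere (w j)) -> (forall i, on_sphere (z i)) ->
     (gamma_min y w z <= (k%:R / (k%:R - 1))%:E)%E) /\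
  (* the bound is attained *)
  (exists (w : 'I_k -> 'rV[R]_d) (z : 'I_N -> 'rV[R]_d),
     (forall j, on_sphere (w j)) /\ (forall i, on_sphere (z i)) /\
     gamma_min y w z = (k%:R / (k%:R - 1))%:E) /\
  (* characterization of maximizers *)
  (forall (w : 'I_k -> 'rV[R]_d) (z : 'I_N -> 'rV[R]_d),
     (forall j, on_sphere (w j)) -> (forall i, on_sphere (z i)) ->
     (gamma_min y w z = (k%:R / (k%:R - 1))%:E <->
      ((forall i j : 'I_k, i != j -> dotv (w i) (w j) = - 1 / (k%:R - 1)) /\
       (forall i : 'I_N, z i = w (y i))))).
Proof.
move=> _ k_gt1 k_le y_surj; split; [|split].
- by move=> w z w_unit z_unit; apply: gamma_min_le_bound.
- have [w [w_unit w_simplex]] := regular_simplex_exists R k_gt1 k_le.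
  exists w, (fun i => w (y i)); do 2!split => //.
  exact: gamma_min_simplex.
- move=> w z w_unit z_unit; split; last by case; apply: gamma_min_simplex.
  move=> gamma_max; split=> [a b|i].
    exact: (maximizer_simplex k_gt1 w_unit z_unit y_surj gamma_max).
  exact: (maximizer_features k_gt1 w_unit z_unit y_surj gamma_max).
Qed.
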